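(* Let $M$ be a magma satisfying $(xy)z = xx$, $x(yz) = xx$ and $xx = yy$ for all $x,y,z\in M$. Then $M$ satisfies $xy = yx$ for all $x,y\in M$ if and only if $M$ avoids both magmas $F$ (on $\{0,1,2,3\}$) and $G$ (on $\{0,1,2,3,4\}$) with Cayley tables \[ \begin{array}{c|cccc} F & 0 & 1 & 2 & 3 \\ \hline 0 & 0 & 0 & 0 & 0 \\ 1 & 0 & 0 & 3 & 0 \\ 2 & 0 & 0 & 0 & 0 \\ 3 & 0 & 0 & 0 & 0 \end{array} \qquad \begin{array}{c|ccccc} G & 0 & 1 & 2 & 3 & 4\\ \hline 0 & 0 & 0 & 0 & 0 & 0\\ 1 & 0 & 0 & 3 & 0 & 0\\ 2 & 0 & 4 & 0 & 0 & 0\\ 3 & 0 & 0 & 0 & 0 & 0\\ 4 & 0 & 0 & 0 & 0 & 0 \end{array}. \]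
   Context: A magma is a nonempty set with a binary operation, written by juxtaposition. A magma $M$ avoids a magma $F$ if no submagma of $M$ is isomorphic to $F$. *)

From mathcomp Require Import all_boot.
Set Implicit Arguments. Unset Strict Implicit. Unset Printing Implicit Defensive.

(* A magma: a carrier type with a binary operation; nonemptiness is
   required separately (hypothesis [inhabited M]). *)

Definition submagma (M : Type) (op : M -> M -> M) (S : M -> Prop) : Prop :=
  (exists x, S x) /\ (forall x y, S x -> S y -> S (op x y)).

Definition iso_to_sub (A : Type) (opA : A -> A -> A)
  (M : Type) (opM : M -> M -> M) (S : M -> Prop) : Prop :=
  exists f : A -> M,
    injective f /\ (forall a, S (f a)) /\ (forall m, S m -> exists a, f a = m)
    /\ (forall a b, f (opA a b) = opM (f a) (f b)).

Definition avoids (M : Type) (opM : M -> M -> M) (A : Type) (opA : A -> A -> A)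
  : Prop :=
  ~ exists S : M -> Prop, submagma opM S /\ iso_to_sub opA opM S.

Definition F_op (x y : 'I_4) : 'I_4 :=
  if (nat_of_ord x == 1) && (nat_of_ord y == 2) then inord 3 else inord 0.

Definition G_op (x y : 'I_5) : 'I_5 :=
  if (nat_of_ord x == 1) && (nat_of_ord y == 2) then inord 3
  else if (nat_of_ord x == 2) && (nat_of_ord y == 1) then inord 4
  else inord 0.

(* Squares are all equal to a single element [e], which absorbs on both sides,
   and every product of a product is [e]; so the only products that can differ
   from [e] are [x y] with [x], [y] not themselves products.  If [x y <> y x],
   the elements [e, x, y, x y] (when [y x = e]) or [e, x, y, x y, y x]
   (otherwise) form a copy of [F] or of [G].  Conversely, [1 2 <> 2 1] in both
   [F] and [G], and an injective morphism into a commutative magma would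
   identify these two products. *)

From mathcomp Require Import all_boot.
From Stdlib Require Import Classical_Prop.

Set Implicit Arguments.
Unset Strict Implicit.

Lemma injective_morphism_not_avoids (M A : Type) (op : M -> M -> M)
    (opA : A -> A -> A) (a0 : A) (f : A -> M) :
  injective f -> (forall a b, f (opA a b) = op (f a) (f b)) ->
  ~ avoids op opA.
Proof.
move=> f_inj f_morph; apply; exists (fun m => exists a, f a = m); split.
  split; first by exists (f a0), a0.
  by move=> _ _ [a <-] [b <-]; exists (opA a b).
exists f; split=> //; split; first by move=> a; exists a.
by split=> // m [a <-]; exists a.
Qed.

Lemma commutative_avoids (M A : Type) (op : M -> M -> M) (opA : A -> A -> A)
    (a b : A) :
  (forall x y, op x y = op y x) -> opA a b <> opA b a -> avoids op opA.
Proof.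
move=> opC opA_ab [S [_ [f [f_inj [_ [_ f_morph]]]]]]; apply: opA_ab.
by apply: f_inj; rewrite !f_morph opC.
Qed.

Section NullSquareMagma.

Variables (M : Type) (op : M -> M -> M) (e : M).
Hypothesis opxx : forall x, op x x = e.
Hypothesis op_opl_sq : forall x y z, op (op x y) z = op x x.
Hypothesis op_opr_sq : forall x y z, op x (op y z) = op x x.

Lemma op_opl x y z : op (op x y) z = e.
Proof. by rewrite op_opl_sq opxx. Qed.

Lemma op_opr x y z : op x (op y z) = e.
Proof. by rewrite op_opr_sq opxx. Qed.

Lemma op_el z : op e z = e.
Proof. by rewrite -(opxx z) op_opl. Qed.

Lemma op_er z : op z e = e.
Proof. by rewrite -(opxx z) op_opr. Qed.

Lemma op_neq_e_distinct x y : op x y <> e ->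
  [/\ x <> e, y <> e, x <> y, op x y <> x & op x y <> y].
Proof.
move=> xy_e; split=> E; apply: xy_e.
- by rewrite E op_el.
- by rewrite E op_er.
- by rewrite E opxx.
- by rewrite -E op_opl.
- by rewrite -E op_opr.
Qed.

Lemma F_not_avoided x y : op x y <> e -> op y x = e -> ~ avoids op F_op.
Proof.
move=> xy_e yx_e; have [x_e y_e x_y xy_x xy_y] := op_neq_e_distinct xy_e.
apply: (injective_morphism_not_avoids ord0
          (f := fun i : 'I_4 => nth e [:: e; x; y; op x y] i)).
  case=> [[|[|[|[|i]]]] Hi] //; case=> [[|[|[|[|j]]]] Hj] //= E;
    apply/val_inj => /=; congruence.
case=> [[|[|[|[|i]]]] Hi] //; case=> [[|[|[|[|j]]]] Hj] //;
  by rewrite /F_op /= ?inordK //= ?opxx ?op_el ?op_er ?op_opl ?op_opr.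
Qed.

Lemma G_not_avoided x y :
  op x y <> e -> op y x <> e -> op x y <> op y x -> ~ avoids op G_op.
Proof.
move=> xy_e yx_e xy_yx.
have [x_e y_e x_y xy_x xy_y] := op_neq_e_distinct xy_e.
have [_ _ _ yx_y yx_x] := op_neq_e_distinct yx_e.
apply: (injective_morphism_not_avoids ord0
          (f := fun i : 'I_5 => nth e [:: e; x; y; op x y; op y x] i)).
  case=> [[|[|[|[|[|i]]]]] Hi] //; case=> [[|[|[|[|[|j]]]]] Hj] //= E;
    apply/val_inj => /=; congruence.
case=> [[|[|[|[|[|i]]]]] Hi] //; case=> [[|[|[|[|[|j]]]]] Hj] //;
  by rewrite /G_op /= ?inordK //= ?opxx ?op_el ?op_er ?op_opl ?op_opr.
Qed.

End NullSquareMagma.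

Theorem mainTheorem10 (M : Type) (op : M -> M -> M) (Mne : inhabited M)
  (h1 : forall x y z, op (op x y) z = op x x)
  (h2 : forall x y z, op x (op y z) = op x x)
  (h3 : forall x y, op x x = op y y) :
  (forall x y, op x y = op y x) <->
  (avoids op F_op /\ avoids op G_op).
Proof.
split.
  move=> opC; split; apply: (commutative_avoids (a := inord 1) (b := inord 2) opC).
    by apply/eqP; rewrite /F_op !inordK //= -val_eqE /= !inordK.
  by apply/eqP; rewrite /G_op !inordK //= -val_eqE /= !inordK.
move=> [avF avG] x y; apply: NNPP => xy_yx.
have opxx z : op z z = op x x by apply: h3.
case: (classic (op x y = op x x)) => [xy_e|xy_e];
  case: (classic (op y x = op x x)) => [yx_e|yx_e].
- by apply: xy_yx; rewrite xy_e yx_e.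
- exact: (F_not_avoided opxx h1 h2 yx_e xy_e).
- exact: (F_not_avoided opxx h1 h2 xy_e yx_e).
- exact: (G_not_avoided opxx h1 h2 xy_e yx_e xy_yx).
Qed.
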